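(* Suppose that for every $n\in\omega$, $\mathbb{P}_n$ is a pre-Pawlikowski lattice such that $\mathsf{S}_{\mathrm{fin}}(\mathbb{V}_{1_{\mathbb{P}_n}},\mathbb{V}_{1_{\mathbb{P}_n}})$ holds. Then $\mathbb{P}:=\prod_{n\in\omega}\mathbb{P}_n$, endowed with the pointwise ordering, is a pre-Pawlikowski lattice satisfying $\mathsf{S}_{\mathrm{fin}}(\mathbb{V}_{1_{\mathbb{P}}},\mathbb{V}_{1_{\mathbb{P}}})$, where $1_{\mathbb{P}}:=(1_{\mathbb{P}_n})_{n\in\omega}$.
   Context: A lattice is a poset where any two elements have a supremum and an infimum; it is bounded if it has a minimum $0$ and maximum $1$. A prime element of a bounded lattice is $q\neq 1$ such that $a\wedge b\leq q$ implies $a\leq q$ or $b\leq q$. The lattice has enough prime elements if whenever $a\not\leq b$ there is a prime $q$ with $b\leq q$ and $a\not\leq q$. A pre-Pawlikowski lattice is a bounded lattice with enough prime elements. For $p$ in a lattice $\mathbb{Q}$, $\mathbb{V}_p$ is the family of subsets $A\subseteq\mathbb{Q}$ with $\sup A=p$. $\mathsf{S}_{\mathrm{fin}}(\mathbb{V}_p,\mathbb{V}_p)$ means: for every sequence $(A_n)_{n\in\omega}$ of members of $\mathbb{V}_p$ there are finite $F_n\subseteq A_n$ with $\sup\bigcup_{n}F_n=p$. *)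

From Stdlib Require Import List.
Set Implicit Arguments.

Section Lat.
Variables (T : Type) (le : T -> T -> Prop).

Definition partial_order : Prop :=
  (forall x, le x x) /\
  (forall x y, le x y -> le y x -> x = y) /\
  (forall x y z, le x y -> le y z -> le x z).

Definition upper_bound (A : T -> Prop) (u : T) : Prop := forall a, A a -> le a u.
Definition lower_bound (A : T -> Prop) (l : T) : Prop := forall a, A a -> le l a.

Definition is_sup (A : T -> Prop) (p : T) : Prop :=
  upper_bound A p /\ forall u, upper_bound A u -> le p u.
Definition is_inf (A : T -> Prop) (m : T) : Prop :=
  lower_bound A m /\ forall l, lower_bound A l -> le l m.

Definition pair_set (a b : T) : T -> Prop := fun x => x = a \/ x = b.

Definition is_max (t : T) : Prop := forall x, le x t.
Definition is_min (t : T) : Prop := forall x, le t x.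

Definition lattice : Prop :=
  partial_order /\
  (forall a b, exists s, is_sup (pair_set a b) s) /\
  (forall a b, exists m, is_inf (pair_set a b) m).

Definition bounded_lattice : Prop :=
  lattice /\ (exists z, is_min z) /\ (exists o, is_max o).

Definition prime_elt (q : T) : Prop :=
  ~ is_max q /\
  forall a b m, is_inf (pair_set a b) m -> le m q -> le a q \/ le b q.

Definition enough_primes : Prop :=
  forall a b, ~ le a b -> exists q, prime_elt q /\ le b q /\ ~ le a q.

Definition pre_Pawlikowski : Prop := bounded_lattice /\ enough_primes.

(* V_p = {A | sup A = p};  S_fin(V_p, V_p), finite subsets given as lists *)
Definition Sfin_V (p : T) : Prop :=
  forall A : nat -> (T -> Prop), (forall n, is_sup (A n) p) ->
  exists F : nat -> list T,
    (forall n x, In x (F n) -> A n x) /\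
    is_sup (fun x => exists n, In x (F n)) p.

End Lat.

Definition prod_le (P : nat -> Type) (le : forall n, P n -> P n -> Prop)
  (x y : forall n, P n) : Prop := forall n, le n (x n) (y n).

(* Suprema and infima in the product
   are exactly the coordinatewise ones: the projection of a supremum is a
   supremum because an upper bound at one coordinate can be patched into the
   supremum itself.  If a is not below b, they differ at some coordinate n, and
   a prime q of P_n separating them gives the prime of the product that is q at
   n and 1 elsewhere.  For S_fin, split the given sequence along a bijection
   omega x omega -> omega into countably many subsequences, one for each
   coordinate n, and apply S_fin in P_n to the n-th coordinates of the n-th
   subsequence; lifting the chosen finite sets back to the product yields
   finite sets whose union has supremum 1 at every coordinate. *)
From Stdlib Require Import List Arith Cantor Eqdep_dec Classical
  FunctionalExtensionality IndefiniteDescription ChoiceFacts.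

Lemma dependent_choice (I : Type) (B : I -> Type) (R : forall i, B i -> Prop) :
  (forall i, exists y, R i y) -> exists f : forall i, B i, forall i, R i (f i).
Proof. exact (non_dep_dep_functional_choice functional_choice B R). Qed.

Lemma list_lift (U V : Type) (f : U -> V) (A : U -> Prop) (G : list V) :
  (forall x, In x G -> exists a, A a /\ f a = x) ->
  exists L, (forall a, In a L -> A a) /\
            (forall x, In x G -> exists a, In a L /\ f a = x).
Proof.
  induction G as [|y G IH]; intros HG.
  - exists nil. split; intros ? [].
  - destruct (HG y (or_introl eq_refl)) as [b [Ab Eb]].
    destruct IH as [L [HLA HLG]]; [intros x Hx; apply HG; right; exact Hx|].
    exists (b :: L). split.
    + intros a [<-|Ha]; [exact Ab | exact (HLA a Ha)].
    + intros x [<-|Hx]; [exists b; split; [left|]; auto|].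
      destruct (HLG x Hx) as [a [Ha Ea]]. exists a. split; [right|]; auto.
Qed.

Section Sup.
Variables (T : Type) (le : T -> T -> Prop).

Lemma is_sup_ext (A B : T -> Prop) p :
  (forall x, A x <-> B x) -> is_sup le A p -> is_sup le B p.
Proof.
  intros AB [Hub Hleast]. split.
  - intros x Bx. apply Hub, AB, Bx.
  - intros u Hu. apply Hleast. intros x Ax. apply Hu, AB, Ax.
Qed.

Lemma is_sup_max_superset (A B : T -> Prop) t :
  is_max le t -> (forall x, A x -> B x) -> is_sup le A t -> is_sup le B t.
Proof.
  intros Ht AB [_ Hleast]. split.
  - intros x _. apply Ht.
  - intros u Hu. apply Hleast. intros x Ax. apply Hu, AB, Ax.
Qed.

End Sup.

Section Product.
Variables (P : nat -> Type) (le : forall n, P n -> P n -> Prop).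

Let Q := forall n, P n.
Let lep := prod_le P le.

Definition update (f : Q) n (x : P n) : Q :=
  fun m => match Nat.eq_dec n m with
           | left e => eq_rect n P x m e
           | right _ => f m
           end.

Lemma update_eq f n (x : P n) : update f n x n = x.
Proof.
  unfold update. destruct (Nat.eq_dec n n) as [e|]; [|congruence].
  rewrite (UIP_dec Nat.eq_dec e eq_refl). reflexivity.
Qed.

Lemma update_neq f n (x : P n) m : n <> m -> update f n x m = f m.
Proof. intros Hnm. unfold update. destruct (Nat.eq_dec n m); congruence. Qed.

Lemma le_update f g n (x : P n) :
  le n (f n) x -> (forall m, n <> m -> le m (f m) (g m)) -> lep f (update g n x).
Proof.
  intros Hn Hm m. destruct (Nat.eq_dec n m) as [<-|Hnm].
  - rewrite update_eq. exact Hn.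
  - rewrite update_neq by exact Hnm. apply Hm, Hnm.
Qed.

Definition coord (A : Q -> Prop) n : P n -> Prop :=
  fun x => exists a, A a /\ a n = x.

Lemma coord_pair_set (a b : Q) n x :
  coord (pair_set a b) n x <-> pair_set (a n) (b n) x.
Proof.
  split.
  - intros [c [[->| ->] <-]]; [left|right]; reflexivity.
  - intros [->| ->]; eexists; split; [left|..|right|]; reflexivity.
Qed.

Lemma prod_partial_order :
  (forall n, partial_order (le n)) -> partial_order lep.
Proof.
  intros Hpo. split; [|split].
  - intros x n. apply Hpo.
  - intros x y Hxy Hyx. apply functional_extensionality_dep. intros n.
    apply (Hpo n); [apply Hxy | apply Hyx].
  - intros x y z Hxy Hyz n. apply (proj2 (proj2 (Hpo n))) with (y n);
      [apply Hxy | apply Hyz].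
Qed.

Lemma prod_is_sup (A : Q -> Prop) s :
  (forall n, is_sup (le n) (coord A n) (s n)) -> is_sup lep A s.
Proof.
  intros Hs. split.
  - intros a Aa n. apply (Hs n). exists a. split; [exact Aa | reflexivity].
  - intros u Hu n. apply (Hs n). intros x [a [Aa <-]]. apply (Hu a Aa).
Qed.

Lemma is_sup_coord (A : Q -> Prop) s n :
  is_sup lep A s -> is_sup (le n) (coord A n) (s n).
Proof.
  intros [Hub Hleast]. split.
  - intros x [a [Aa <-]]. apply (Hub a Aa).
  - intros u Hu.
    assert (Hsu : lep s (update s n u)).
    { apply Hleast. intros a Aa. apply le_update.
      - apply Hu. exists a. split; [exact Aa | reflexivity].
      - intros m _. apply (Hub a Aa). }
    specialize (Hsu n). rewrite update_eq in Hsu. exact Hsu.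
Qed.

Lemma prod_pair_sup (a b : forall n, P n) :
  (forall n, exists s, is_sup (le n) (pair_set (a n) (b n)) s) ->
  exists s, is_sup lep (pair_set a b) s.
Proof.
  intros Hs. destruct (dependent_choice _ _ _ Hs) as [s Hsn].
  exists s. apply prod_is_sup. intros n.
  apply is_sup_ext with (2 := Hsn n). intros x. symmetry. apply coord_pair_set.
Qed.

End Product.

Arguments update {P}.
Arguments coord {P}.

Section Dual.
Variables (P : nat -> Type) (le : forall n, P n -> P n -> Prop).

(* Infima for [le] are suprema for the converse order, and [prod_le] commutes
   with taking the converse: both facts hold by conversion. *)
Let ge n (x y : P n) := le n y x.

Lemma is_inf_coord (A : (forall n, P n) -> Prop) m n :
  is_inf (prod_le P le) A m -> is_inf (le n) (coord A n) (m n).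
Proof. exact (is_sup_coord P ge A m n). Qed.

Lemma prod_pair_inf (a b : forall n, P n) :
  (forall n, exists m, is_inf (le n) (pair_set (a n) (b n)) m) ->
  exists m, is_inf (prod_le P le) (pair_set a b) m.
Proof. exact (prod_pair_sup P ge a b). Qed.

End Dual.

Lemma prod_bounded_lattice (P : nat -> Type) (le : forall n, P n -> P n -> Prop)
  (top : forall n, P n) :
  (forall n, is_max (le n) (top n)) -> (forall n, bounded_lattice (le n)) ->
  bounded_lattice (prod_le P le).
Proof.
  intros Htop HL.
  split; [split; [|split] | split].
  - apply prod_partial_order. intros n. apply HL.
  - intros a b. apply prod_pair_sup. intros n. apply HL.
  - intros a b. apply prod_pair_inf. intros n. apply HL.
  - destruct (dependent_choice _ _ _ (fun n => proj1 (proj2 (HL n)))) as [z Hz].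
    exists z. intros x n. apply Hz.
  - exists top. intros x n. apply Htop.
Qed.

Section Primes.
Variables (P : nat -> Type) (le : forall n, P n -> P n -> Prop)
  (top : forall n, P n).
Hypothesis Htop : forall n, is_max (le n) (top n).

Lemma le_update_top (x : forall n, P n) n (q : P n) :
  prod_le P le x (update top n q) <-> le n (x n) q.
Proof.
  split.
  - intros Hx. specialize (Hx n). rewrite update_eq in Hx. exact Hx.
  - intros Hn. apply le_update; [exact Hn | intros m _; apply Htop].
Qed.

Lemma prime_elt_update n (q : P n) :
  (forall x y z, le n x y -> le n y z -> le n x z) ->
  prime_elt (le n) q -> prime_elt (prod_le P le) (update top n q).
Proof.
  intros Htrans [Hqmax Hq]. split.
  - intros Hmax. apply Hqmax. intros x.
    apply Htrans with (top n); [apply Htop | apply le_update_top, Hmax].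
  - intros a b m Hm Hmq. rewrite !le_update_top.
    apply Hq with (m n); [|apply le_update_top, Hmq].
    apply is_sup_ext with (2 := is_inf_coord P le _ m n Hm).
    apply coord_pair_set.
Qed.

Lemma prod_enough_primes :
  (forall n, partial_order (le n)) -> (forall n, enough_primes (le n)) ->
  enough_primes (prod_le P le).
Proof.
  intros Hpo Hpr a b Hab.
  destruct (not_all_ex_not _ _ Hab) as [n Hn].
  destruct (Hpr n _ _ Hn) as [q [Hq [Hbq Haq]]].
  exists (update top n q). split; [|split].
  - apply prime_elt_update; [apply Hpo | exact Hq].
  - apply le_update_top, Hbq.
  - rewrite le_update_top. exact Haq.
Qed.

End Primes.

Section Sfin.
Variables (P : nat -> Type) (le : forall n, P n -> P n -> Prop)
  (top : forall n, P n).
Hypothesis Htop : forall n, is_max (le n) (top n).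

Let Q := forall n, P n.
Let union (F : nat -> list Q) : Q -> Prop := fun a => exists j, In a (F j).

Lemma Sfin_V_coord n (B : nat -> Q -> Prop) :
  Sfin_V (le n) (top n) -> (forall j, is_sup (prod_le P le) (B j) top) ->
  exists G : nat -> list Q, (forall j a, In a (G j) -> B j a) /\
    is_sup (le n) (coord (union G) n) (top n).
Proof.
  intros HS HB.
  destruct (HS (fun j => coord (B j) n) (fun j => is_sup_coord P le _ _ n (HB j)))
    as [F [HFB HF]].
  destruct (functional_choice _
              (fun j => list_lift _ _ (fun a : Q => a n) (B j) (F j) (HFB j)))
    as [G HG].
  exists G. split.
  - intros j a Ha. apply (proj1 (HG j) a Ha).
  - apply is_sup_max_superset with (3 := HF); [apply Htop|].
    intros x [j Hx]. destruct (proj2 (HG j) x Hx) as [a [Ha <-]].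
    exists a. split; [exists j; exact Ha | reflexivity].
Qed.

Lemma prod_Sfin_V :
  (forall n, Sfin_V (le n) (top n)) -> Sfin_V (prod_le P le) top.
Proof.
  intros HS A HA.
  destruct (dependent_choice _ _ _
              (fun n => Sfin_V_coord n (fun j => A (to_nat (n, j))) (HS n)
                          (fun j => HA _)))
    as [G HG].
  exists (fun k => G (fst (of_nat k)) (snd (of_nat k))). split.
  - intros k a Ha. pose proof (proj1 (HG _) _ _ Ha) as HAa.
    rewrite <- surjective_pairing, cancel_to_of in HAa. exact HAa.
  - apply prod_is_sup. intros n.
    apply is_sup_max_superset with (3 := proj2 (HG n)); [apply Htop|].
    intros x [a [[j Ha] <-]]. exists a. split; [|reflexivity].
    exists (to_nat (n, j)). rewrite cancel_of_to. exact Ha.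
Qed.

End Sfin.

Theorem lemma2p1 (P : nat -> Type) (le : forall n, P n -> P n -> Prop)
  (top : forall n, P n)
  (Htop : forall n, is_max (le n) (top n))
  (HP : forall n, pre_Pawlikowski (le n))
  (HS : forall n, Sfin_V (le n) (top n)) :
  pre_Pawlikowski (prod_le P le) /\ Sfin_V (prod_le P le) top.
Proof.
  split; [split|].
  - apply prod_bounded_lattice with top; [exact Htop|].
    intros n. apply HP.
  - apply prod_enough_primes with top; [exact Htop | |].
    + intros n. apply HP.
    + intros n. apply HP.
  - apply prod_Sfin_V; assumption.
Qed.
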